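(* Let $\zeta$ be a uniform binary substitution that is not primitive. Then for every $y\in X_\zeta$, every $m,\ell\in\mathbb N$ and every $\varepsilon>0$, \[ C_\ell(y^{(m)},\infty,\varepsilon)=\mathrm{RR}_\ell(y^{(m)},\infty,\varepsilon)=\mathrm{DET}_\ell(y^{(m)},\infty,\varepsilon)=1 \quad\text{and}\quad \mathrm{L}_\ell(y^{(m)},\infty,\varepsilon)=\infty . \]
   Context: Alphabet $A=\{0,1\}$, $\Sigma=A^{\mathbb N_0}$ with metric $\rho(y,z)=2^{-\min\{i\ge0:\,y_i\ne z_i\}}$ ($y\ne z$), $\rho(y,y)=0$, shift $\sigma$. A uniform binary substitution is a map $\zeta:A\to A^*$ with $|\zeta(0)|=|\zeta(1)|=q\ge2$, extended to words by concatenation; $\mathcal L_\zeta$ is the set of subwords of words $\zeta^k(a)$, $a\in A,k\ge1$; $X_\zeta=\{y\in\Sigma:y_0\dots y_{n-1}\in\mathcal L_\zeta\ \forall n\}$. $\zeta$ is primitive if for some $k\ge1$ each letter occurs in $\zeta^k(a)$ for every $a$. Recurrence notions for a sequence $z$ (over a finite alphabet, with the analogous metric and shift): recurrence plot $R(z,n,\varepsilon)$, $n\ge2$, is the $n\times n$ matrix ($0\le i,j<n$) with entry $1$ iff $\rho(\sigma^iz,\sigma^jz)\le\varepsilon$. A line of length $\ell$ is $(i,j,\ell)$ with $0\le i,j\le n-\ell$, $i\ne j$, entries $(i+k,j+k)=1$ for $0\le k<\ell$, entry $(i-1,j-1)=0$ if $\min\{i,j\}>0$, entry $(i+\ell,j+\ell)=0$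 if $\max\{i,j\}<n-\ell$. For finite $n$: $N_\ell$ = number of lines of length exactly $\ell$, $\lambda_\ell=N_\ell/(n^2-n)$, $\Lambda_\ell=\sum_{l\ge\ell}\lambda_l$, $\mathrm{RR}_\ell=\sum_{l\ge\ell}l\lambda_l$, $\mathrm{DET}_\ell=\mathrm{RR}_\ell/\mathrm{RR}_1$, $\mathrm{L}_\ell=\mathrm{RR}_\ell/\Lambda_\ell$ (average line length). Correlation sum $C_\ell(z,n,\varepsilon)=n^{-2}\#\{(i,j)\in[0,n)^2:\max_{0\le k<\ell}\rho(\sigma^{i+k}z,\sigma^{j+k}z)\le\varepsilon\}$. Values at $(z,\infty,\varepsilon)$ are the limits as $n\to\infty$ (for $\mathrm{L}_\ell$, the value $\infty$ means the quantity tends to $+\infty$, equivalently $\mathrm{L}_\ell=\ell+C_{\ell+1}/(C_\ell-C_{\ell+1})$ at $n=\infty$ with zero denominator). Embedding: $y^{(m)}$ is the sequence over $A^m$ with $j$-th letter $y_j\dots y_{j+m-1}$. *)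

From Stdlib Require Import Reals Lra Lia Arith List Classical ClassicalDescription IndefiniteDescription.
From Coquelicot Require Import Coquelicot.
Import ListNotations.
Open Scope R_scope.

(* rho(y,z) = 2^{-min{i : y_i <> z_i}} if y <> z, and 0 if y = z. *)
Definition first_diff_spec {T : Type} (y z : nat -> T) (i : nat) : Prop :=
  y i <> z i /\ forall j, (j < i)%nat -> y j = z j.

Definition rho {T : Type} (y z : nat -> T) : R :=
  match excluded_middle_informative (exists i, first_diff_spec y z i) with
  | left H => / 2 ^ (proj1_sig (constructive_indefinite_description _ H))
  | right _ => 0
  end.

Definition shift {T : Type} (i : nat) (z : nat -> T) : nat -> T := fun k => z (i + k)%nat.

Definition Rleb (a b : R) : bool := if Rle_dec a b then true else false.

Definition entry {T : Type} (z : nat -> T) (eps : R) (i j : nat) : bool :=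
  Rleb (rho (shift i z) (shift j z)) eps.

Definition is_line {T : Type} (z : nat -> T) (n : nat) (eps : R) (l i j : nat) : bool :=
  (i + l <=? n)%nat && (j + l <=? n)%nat && negb (i =? j)%nat &&
  forallb (fun k => entry z eps (i + k) (j + k)) (seq 0 l) &&
  (if (0 <? Nat.min i j)%nat then negb (entry z eps (i - 1) (j - 1)) else true) &&
  (if (Nat.max i j <? n - l)%nat then negb (entry z eps (i + l) (j + l)) else true).

Definition pairs (n : nat) : list (nat * nat) := list_prod (seq 0 n) (seq 0 n).

Definition Nlines {T : Type} (z : nat -> T) (n : nat) (eps : R) (l : nat) : nat :=
  length (filter (fun p => is_line z n eps l (fst p) (snd p)) (pairs n)).

Definition lambda {T : Type} (z : nat -> T) (n : nat) (eps : R) (l : nat) : R :=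
  INR (Nlines z n eps l) / (INR n * INR n - INR n).

(* sum over l >= ell (lines have length at most n, so l ranges in [ell, n]) *)
Definition sum_from (ell n : nat) (f : nat -> R) : R :=
  fold_right Rplus 0 (map f (seq ell (S n - ell))).

Definition Lambda {T : Type} (z : nat -> T) (n : nat) (eps : R) (ell : nat) : R :=
  sum_from ell n (lambda z n eps).

Definition RR {T : Type} (z : nat -> T) (n : nat) (eps : R) (ell : nat) : R :=
  sum_from ell n (fun l => INR l * lambda z n eps l).

Definition DET {T : Type} (z : nat -> T) (n : nat) (eps : R) (ell : nat) : R :=
  RR z n eps ell / RR z n eps 1.

Definition Lavg {T : Type} (z : nat -> T) (n : nat) (eps : R) (ell : nat) : R :=
  RR z n eps ell / Lambda z n eps ell.

Definition Csum {T : Type} (z : nat -> T) (n : nat) (eps : R) (ell : nat) : R :=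
  INR (length (filter (fun p => forallb (fun k => Rleb (rho (shift (fst p + k) z)
                                                         (shift (snd p + k) z)) eps)
                                         (seq 0 ell))
                      (pairs n))) / (INR n * INR n).

Definition embed (m : nat) (y : nat -> bool) : nat -> list bool :=
  fun j => map (fun k => y (j + k)%nat) (seq 0 m).

(* ---------- Substitutions (alphabet A = bool, 0 = false, 1 = true) ---------- *)
Definition subst_word (zeta : bool -> list bool) (w : list bool) : list bool :=
  flat_map zeta w.

Definition subst_iter (zeta : bool -> list bool) (k : nat) (a : bool) : list bool :=
  Nat.iter k (subst_word zeta) [a].

Definition uniform_subst (zeta : bool -> list bool) (q : nat) : Prop :=
  (2 <= q)%nat /\ length (zeta false) = q /\ length (zeta true) = q.

Definition subst_primitive (zeta : bool -> list bool) : Prop :=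
  exists k, (1 <= k)%nat /\ forall a b, In b (subst_iter zeta k a).

Definition subword (u w : list bool) : Prop := exists p s, w = p ++ u ++ s.

Definition in_lang (zeta : bool -> list bool) (u : list bool) : Prop :=
  exists a k, (1 <= k)%nat /\ subword u (subst_iter zeta k a).

Definition in_X (zeta : bool -> list bool) (y : nat -> bool) : Prop :=
  forall n, in_lang zeta (map y (seq 0 n)).

From Stdlib Require Import Reals Lra Lia Arith List Bool.
From Stdlib Require Import Classical ClassicalDescription IndefiniteDescription.
From Coquelicot Require Import Coquelicot.
Import ListNotations.
Open Scope R_scope.

(* A non-primitive uniform binary substitution either has two constant images, and then
   every [y] in [X_zeta] is constant, or it has a letter [c] with [zeta c = c^q] and [c] in
   [zeta (negb c)]; then [zeta^j b] has at most [(q-1)^j] letters other than [c] among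
   [q^j], so the letters of [y] other than [c] have density zero.

   Hence all but [o(n)] indices [i < n] are usable: they start a long run of [c]'s, and
   for two usable [i], [j] the points [sigma^(i+t) y^(m)] and [sigma^(j+t) y^(m)],
   [t < ell], are [eps]-close.  So all but [O(n * #unusable) = o(n^2)] off-diagonal entries
   of the recurrence plot lie on a line of length at least [ell]; as every entry lies on
   at most one line, [RR_ell], [DET_ell] and [C_ell] tend to 1.  A line can only start on
   the boundary of the plot or next to an unusable index, so there are only
   [O(n + n * #unusable) = o(n^2)] lines and the average line length tends to infinity. *)

(** * Finite sums of natural numbers *)

Section FiniteSums.
Local Open Scope nat_scope.

Fixpoint lsum {A : Type} (s : list A) (f : A -> nat) : nat :=
  match s with [] => 0 | x :: t => f x + lsum t f end.

Definition dsum (n : nat) (F : nat -> nat -> nat) : nat :=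
  lsum (seq 0 n) (fun a => lsum (seq 0 n) (F a)).

Lemma lsum_app {A} (s t : list A) f : lsum (s ++ t) f = lsum s f + lsum t f.
Proof. induction s; simpl; lia. Qed.

Lemma lsum_map {A B} (g : A -> B) s f : lsum (map g s) f = lsum s (fun x => f (g x)).
Proof. induction s; simpl; auto. Qed.

Lemma lsum_seqS f n : lsum (seq 0 (S n)) f = lsum (seq 0 n) f + f n.
Proof. rewrite seq_S, lsum_app; simpl; lia. Qed.

Lemma lsum_le {A} (s : list A) f g :
  (forall x, In x s -> f x <= g x) -> lsum s f <= lsum s g.
Proof.
  induction s as [|a s IH]; simpl; intros H; [lia|].
  specialize (IH (fun x Hx => H x (or_intror Hx))). specialize (H a (or_introl eq_refl)). lia.
Qed.

Lemma lsum_ext {A} (s : list A) f g : (forall x, In x s -> f x = g x) -> lsum s f = lsum s g.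
Proof. intros H; apply Nat.le_antisymm; apply lsum_le; intros x Hx; rewrite H; auto. Qed.

Lemma lsum_add {A} (s : list A) f g : lsum s (fun x => f x + g x) = lsum s f + lsum s g.
Proof. induction s; simpl; lia. Qed.

Lemma lsum_const {A} (s : list A) c : lsum s (fun _ => c) = length s * c.
Proof. induction s; simpl; lia. Qed.

Lemma lsum_scale {A} (s : list A) c f : lsum s (fun x => c * f x) = c * lsum s f.
Proof. induction s; simpl; lia. Qed.

Lemma lsum_zero {A} (s : list A) f : (forall x, In x s -> f x = 0) -> lsum s f = 0.
Proof. intros H. rewrite (lsum_ext _ _ (fun _ => 0)), lsum_const; auto; lia. Qed.

Lemma lsum_swap {A B} (s : list A) (t : list B) F :
  lsum s (fun x => lsum t (F x)) = lsum t (fun y => lsum s (fun x => F x y)).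
Proof.
  induction s; simpl.
  - symmetry. apply lsum_zero. auto.
  - rewrite IHs, <- lsum_add. reflexivity.
Qed.

Lemma le_lsum {A} (s : list A) f x : In x s -> f x <= lsum s f.
Proof. induction s; simpl; [tauto|]. intros [->|H]; [lia|]. specialize (IHs H); lia. Qed.

Lemma lsum_le_single {A} (s : list A) f x0 :
  NoDup s -> (forall x, In x s -> x <> x0 -> f x = 0) -> lsum s f <= f x0.
Proof.
  induction 1 as [|a s Ha Hs IH]; simpl; intros H; [lia|].
  destruct (classic (a = x0)) as [<-|E].
  - rewrite lsum_zero; [lia|]. intros x Hx. apply H; auto. intros ->. contradiction.
  - rewrite (H a (or_introl eq_refl) E). apply IH; auto.
Qed.

Lemma lsum_seq_le f m n : m <= n -> lsum (seq 0 m) f <= lsum (seq 0 n) f.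
Proof. induction 1; [lia|]. rewrite lsum_seqS. lia. Qed.

Lemma lsum_seq_shift_le f s n : lsum (seq 0 n) (fun a => f (a + s)) <= lsum (seq 0 (n + s)) f.
Proof.
  induction n; [simpl; lia|].
  rewrite lsum_seqS, Nat.add_succ_l, lsum_seqS. lia.
Qed.

Lemma lsum_seq_shift f k n :
  lsum (seq 0 n) (fun a => if k <=? a then f (a - k) else 0) = lsum (seq 0 (n - k)) f.
Proof.
  induction n; [reflexivity|].
  rewrite lsum_seqS, IHn. destruct (Nat.leb_spec k n).
  - replace (S n - k) with (S (n - k)) by lia. rewrite lsum_seqS. reflexivity.
  - replace (S n - k) with 0 by lia. replace (n - k) with 0 by lia. simpl. lia.
Qed.

Lemma lsum_seq_vanishing_tail f m n : m <= n -> (forall i, m <= i < n -> f i = 0) ->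
  lsum (seq 0 n) f = lsum (seq 0 m) f.
Proof.
  induction 1 as [|n Hmn IH]; intros Hz; [reflexivity|].
  rewrite lsum_seqS, IH, (Hz n); [lia | lia | intros; apply Hz; lia].
Qed.

Lemma lsum_seq_shift_vanishing f k n : (forall i, n <= i + k -> f i = 0) ->
  lsum (seq 0 n) (fun a => if k <=? a then f (a - k) else 0) = lsum (seq 0 n) f.
Proof.
  intros H. rewrite lsum_seq_shift. symmetry.
  apply lsum_seq_vanishing_tail; [lia|]. intros; apply H; lia.
Qed.

Lemma lsum_b2n_ltb n l : lsum (seq 0 n) (fun k => Nat.b2n (k <? l)) = Nat.min n l.
Proof.
  induction n; [reflexivity|].
  rewrite lsum_seqS, IHn. destruct (Nat.ltb_spec n l); cbn [Nat.b2n]; lia.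
Qed.

Lemma lsum_b2n_eqb n a : a < n -> lsum (seq 0 n) (fun b => Nat.b2n (a =? b)) = 1.
Proof.
  intros Ha. apply Nat.le_antisymm.
  - eapply Nat.le_trans. apply (lsum_le_single _ _ a). apply seq_NoDup.
    + intros x _ Hx. destruct (Nat.eqb_spec a x); simpl; congruence.
    + rewrite Nat.eqb_refl. simpl; lia.
  - eapply Nat.le_trans. 2: { apply (le_lsum _ (fun b => Nat.b2n (a =? b)) a). apply in_seq; lia. }
    rewrite Nat.eqb_refl. simpl; lia.
Qed.

Lemma length_filter_list_prod {A B} (s : list A) (t : list B) (p : A * B -> bool) :
  length (filter p (list_prod s t)) = lsum s (fun x => lsum t (fun y => Nat.b2n (p (x, y)))).
Proof.
  induction s as [|a s IH]; simpl; [reflexivity|].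
  rewrite filter_app, length_app, IH. f_equal. clear.
  induction t as [|b t IHt]; simpl; [reflexivity|]. destruct (p (a, b)); simpl; lia.
Qed.

Lemma dsum_le n F G : (forall a b, F a b <= G a b) -> dsum n F <= dsum n G.
Proof. intros H. apply lsum_le; intros a _; apply lsum_le; auto. Qed.

Lemma dsum_ext n F G : (forall a b, F a b = G a b) -> dsum n F = dsum n G.
Proof. intros H. apply lsum_ext; intros a _; apply lsum_ext; auto. Qed.

Lemma dsum_add n F G : dsum n (fun a b => F a b + G a b) = dsum n F + dsum n G.
Proof.
  unfold dsum. rewrite <- lsum_add. apply lsum_ext. intros a _. apply lsum_add.
Qed.

Lemma dsum_scale n c F : c * dsum n F = dsum n (fun a b => c * F a b).
Proof.
  unfold dsum. rewrite <- lsum_scale. apply lsum_ext. intros a _. symmetry. apply lsum_scale.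
Qed.

Lemma dsum_row n f : dsum n (fun a _ => f a) = n * lsum (seq 0 n) f.
Proof.
  unfold dsum. rewrite <- lsum_scale. apply lsum_ext. intros a _.
  rewrite lsum_const, length_seq. lia.
Qed.

Lemma dsum_col n f : dsum n (fun _ b => f b) = n * lsum (seq 0 n) f.
Proof. unfold dsum. rewrite lsum_const, length_seq. reflexivity. Qed.

Lemma dsum_diag n : dsum n (fun a b => Nat.b2n (a =? b)) = n.
Proof.
  unfold dsum. rewrite (lsum_ext _ _ (fun _ => 1)), lsum_const, length_seq; [lia|].
  intros a Ha. apply in_seq in Ha. apply lsum_b2n_eqb; lia.
Qed.

Lemma dsum_offdiag n : dsum n (fun a b => Nat.b2n (negb (a =? b))) = n * n - n.
Proof.
  assert (E : dsum n (fun a b => Nat.b2n (negb (a =? b)) + Nat.b2n (a =? b)) = n * n).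
  { rewrite (dsum_ext _ _ (fun _ _ => 1)), dsum_col, lsum_const, length_seq; [lia|].
    intros a b; destruct (a =? b); reflexivity. }
  rewrite dsum_add, dsum_diag in E. lia.
Qed.

Lemma dsum_pairs_ge n (u : nat -> bool) :
  n * n <= dsum n (fun a b => Nat.b2n (u a && u b))
           + 2 * n * lsum (seq 0 n) (fun a => Nat.b2n (negb (u a))).
Proof.
  assert (H : dsum n (fun _ _ => 1) <= dsum n (fun a b =>
    Nat.b2n (u a && u b) + Nat.b2n (negb (u a)) + Nat.b2n (negb (u b)))).
  { apply dsum_le; intros a b; destruct (u a), (u b); simpl; lia. }
  rewrite !dsum_add, (dsum_row n (fun a => Nat.b2n (negb (u a)))), !dsum_col, lsum_const,
    length_seq in H.
  lia.
Qed.

Lemma dsum_offdiag_pairs_ge n (u : nat -> bool) :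
  n * n - n <= dsum n (fun a b => Nat.b2n (u a && u b && negb (a =? b)))
               + 2 * n * lsum (seq 0 n) (fun a => Nat.b2n (negb (u a))).
Proof.
  assert (H : dsum n (fun a b => Nat.b2n (u a && u b)) <= dsum n (fun a b =>
    Nat.b2n (u a && u b && negb (a =? b)) + Nat.b2n (a =? b))).
  { apply dsum_le; intros a b; destruct (u a && u b), (a =? b); simpl; lia. }
  rewrite dsum_add, dsum_diag in H. pose proof (dsum_pairs_ge n u). lia.
Qed.

Lemma b2n_negb_forallb {A} (p : A -> bool) l :
  Nat.b2n (negb (forallb p l)) <= lsum l (fun x => Nat.b2n (negb (p x))).
Proof. induction l as [|x l IH]; simpl; [lia|]. destruct (p x); simpl; lia. Qed.

Lemma lsum_dsum_swap {A} (s : list A) n F :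
  lsum s (fun x => dsum n (F x)) = dsum n (fun a b => lsum s (fun x => F x a b)).
Proof.
  unfold dsum. rewrite lsum_swap. apply lsum_ext. intros a _. apply lsum_swap.
Qed.

Lemma dsum_translate n k F : (forall i j, n <= i + k \/ n <= j + k -> F i j = 0) ->
  dsum n (fun a b => if (k <=? a) && (k <=? b) then F (a - k) (b - k) else 0) = dsum n F.
Proof.
  intros HF. unfold dsum.
  rewrite <- (lsum_seq_shift_vanishing (fun i => lsum (seq 0 n) (F i)) k n).
  - apply lsum_ext. intros a _. destruct (Nat.leb_spec k a); simpl.
    + apply lsum_seq_shift_vanishing. intros; apply HF; lia.
    + now apply lsum_zero.
  - intros i Hi. apply lsum_zero. intros; apply HF; lia.
Qed.

End FiniteSums.

(** * Lines of a recurrence plot *)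

Section Lines.
Local Open Scope nat_scope.
Context {T : Type} (z : nat -> T) (n : nat) (eps : R).

Lemma is_line_iff l i j : is_line z n eps l i j = true <->
  i + l <= n /\ j + l <= n /\ i <> j /\
  (forall t, t < l -> entry z eps (i + t) (j + t) = true) /\
  (0 < i -> 0 < j -> entry z eps (i - 1) (j - 1) = false) /\
  (i + l < n -> j + l < n -> entry z eps (i + l) (j + l) = false).
Proof.
  unfold is_line.
  rewrite !andb_true_iff, !Nat.leb_le, negb_true_iff, Nat.eqb_neq, forallb_forall.
  destruct (Nat.ltb_spec 0 (Nat.min i j)), (Nat.ltb_spec (Nat.max i j) (n - l));
    rewrite ?negb_true_iff; split.
  all: first
    [ intros [[[[[? ?] ?] Hd] ?] ?]; repeat split; auto;
      intros; first [apply Hd, in_seq; lia | lia]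
    | intros (? & ? & ? & Hd & Hs & He); repeat split; auto;
      first [intros t Ht; apply in_seq in Ht; apply Hd; lia | apply Hs; lia | apply He; lia] ].
Qed.

(* The boundary conditions in [is_line] keep two lines on the same diagonal from
   overlapping. *)
Lemma line_unique l i j l' i' j' k k' :
  is_line z n eps l i j = true -> is_line z n eps l' i' j' = true ->
  k < l -> k' < l' -> i + k = i' + k' -> j + k = j' + k' -> l = l' /\ k = k'.
Proof.
  intros (A1 & B1 & C1 & D1 & F1 & G1)%is_line_iff (A2 & B2 & C2 & D2 & F2 & G2)%is_line_iff
    Hk Hk' E1 E2.
  assert (k = k') as <-.
  { destruct (Nat.lt_total k k') as [H|[H|H]]; auto; exfalso.
    - specialize (D2 (k' - k - 1) ltac:(lia)).
      replace (i' + (k' - k - 1)) with (i - 1) in D2 by lia.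
      replace (j' + (k' - k - 1)) with (j - 1) in D2 by lia.
      rewrite F1 in D2 by lia. discriminate.
    - specialize (D1 (k - k' - 1) ltac:(lia)).
      replace (i + (k - k' - 1)) with (i' - 1) in D1 by lia.
      replace (j + (k - k' - 1)) with (j' - 1) in D1 by lia.
      rewrite F2 in D1 by lia. discriminate. }
  assert (i = i') as <- by lia. assert (j = j') as <- by lia. split; auto.
  destruct (Nat.lt_total l l') as [H|[H|H]]; auto; exfalso.
  - specialize (G1 ltac:(lia) ltac:(lia)). rewrite D2 in G1 by lia. discriminate.
  - specialize (G2 ltac:(lia) ltac:(lia)). rewrite D1 in G2 by lia. discriminate.
Qed.

Lemma longest_run (P : nat -> bool) B : exists k, k <= B /\
  (forall s, s < k -> P s = true) /\ (k < B -> P k = false).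
Proof.
  induction B as [|B (k & Hk & Hrun & Hstop)].
  - exists 0. repeat split; intros; lia.
  - destruct (Nat.eq_dec k B) as [->|].
    + destruct (P B) eqn:E.
      * exists (S B). repeat split; intros; try lia.
        destruct (Nat.eq_dec s B) as [->|]; auto. apply Hrun; lia.
      * exists B. repeat split; auto.
    + exists k. repeat split; auto; try lia. intros; apply Hstop; lia.
Qed.

Lemma line_through a b ell : 1 <= ell -> a <> b -> a + ell <= n -> b + ell <= n ->
  (forall t, t < ell -> entry z eps (a + t) (b + t) = true) ->
  exists l k, k < l /\ k <= a /\ k <= b /\ ell <= l <= n /\
    is_line z n eps l (a - k) (b - k) = true.
Proof.
  intros Hell Hab Ha Hb He.
  destruct (longest_run (fun s => entry z eps (a - 1 - s) (b - 1 - s)) (Nat.min a b))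
    as (k & Hk & Hback & Hstart).
  destruct (longest_run (fun s => entry z eps (a + s) (b + s)) (n - Nat.max a b))
    as (f & Hf & Hfwd & Hend).
  assert (ell <= f).
  { destruct (Nat.le_gt_cases ell f); auto.
    specialize (Hend ltac:(lia)). rewrite He in Hend by lia. discriminate. }
  exists (k + f), k. repeat split; try lia.
  apply is_line_iff. repeat split; try lia.
  - intros t Ht. destruct (Nat.lt_ge_cases t k).
    + specialize (Hback (k - 1 - t) ltac:(lia)).
      replace (a - 1 - (k - 1 - t)) with (a - k + t) in Hback by lia.
      replace (b - 1 - (k - 1 - t)) with (b - k + t) in Hback by lia. exact Hback.
    + specialize (Hfwd (t - k) ltac:(lia)).
      replace (a + (t - k)) with (a - k + t) in Hfwd by lia.
      replace (b + (t - k)) with (b - k + t) in Hfwd by lia. exact Hfwd.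
  - intros. replace (a - k - 1) with (a - 1 - k) by lia.
    replace (b - k - 1) with (b - 1 - k) by lia. apply Hstart; lia.
  - intros. replace (a - k + (k + f)) with (a + f) by lia.
    replace (b - k + (k + f)) with (b + f) by lia. apply Hend; lia.
Qed.

End Lines.

(** * Counting recurrences and lines *)

Section PlotCounts.
Local Open Scope nat_scope.
Context {T : Type} (z : nat -> T) (eps : R).

Definition RRcount (n ell' : nat) : nat :=
  lsum (seq ell' (S n - ell')) (fun l => l * Nlines z n eps l).

Definition kth_point_of_line (n l k a b : nat) : bool :=
  (k <? l) && (k <=? a) && (k <=? b) && is_line z n eps l (a - k) (b - k).

Definition covering (n ell' a b : nat) : nat :=
  lsum (seq ell' (S n - ell')) (fun l => lsum (seq 0 n) (fun k =>
    Nat.b2n (kth_point_of_line n l k a b))).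

Lemma Nlines_dsum n l : Nlines z n eps l = dsum n (fun i j => Nat.b2n (is_line z n eps l i j)).
Proof. apply length_filter_list_prod. Qed.

(* A line of length [l] starting at [(i, j)] covers the [l] points [(i + k, j + k)]. *)
Lemma RRcount_dsum n ell' : RRcount n ell' = dsum n (covering n ell').
Proof.
  unfold RRcount, covering. rewrite <- lsum_dsum_swap. apply lsum_ext. intros l Hl.
  apply in_seq in Hl. rewrite <- lsum_dsum_swap.
  transitivity (lsum (seq 0 n) (fun k => Nat.b2n (k <? l) * Nlines z n eps l)).
  { rewrite (lsum_ext _ _ (fun k => Nlines z n eps l * Nat.b2n (k <? l))) by (intros; lia).
    rewrite lsum_scale, lsum_b2n_ltb, Nat.min_r by lia. lia. }
  apply lsum_ext. intros k _.
  rewrite Nlines_dsum, dsum_scale, <- (dsum_translate n k).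
  - apply dsum_ext. intros a b. unfold kth_point_of_line.
    destruct (k <? l), (k <=? a), (k <=? b), (is_line z n eps l (a - k) (b - k)); reflexivity.
  - intros i j Hij. destruct (is_line z n eps l i j) eqn:E; simpl; [|lia].
    apply is_line_iff in E as (? & ? & _). destruct (Nat.ltb_spec k l); simpl; lia.
Qed.

Lemma covering_le n ell' a b : covering n ell' a b <= Nat.b2n (negb (a =? b)).
Proof.
  unfold covering.
  destruct (classic (exists l0 k0, kth_point_of_line n l0 k0 a b = true))
    as [(l0 & k0 & H0)|HN].
  - assert (U : forall l k, kth_point_of_line n l k a b = true -> l = l0 /\ k = k0).
    { unfold kth_point_of_line in *. intros l k H.
      rewrite !andb_true_iff, Nat.ltb_lt, !Nat.leb_le in H, H0.
      destruct H as [[[? ?] ?] ?], H0 as [[[? ?] ?] ?].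
      eapply line_unique; eauto; lia. }
    assert (a <> b).
    { unfold kth_point_of_line in H0.
      apply andb_true_iff in H0 as [_ (_ & _ & ? & _)%is_line_iff]. lia. }
    destruct (Nat.eqb_spec a b); [contradiction|]. simpl.
    eapply Nat.le_trans. apply (lsum_le_single _ _ l0). apply seq_NoDup.
    { intros l _ Hl. apply lsum_zero. intros k _.
      destruct (kth_point_of_line n l k a b) eqn:E; auto. apply U in E. tauto. }
    eapply Nat.le_trans. apply (lsum_le_single _ _ k0). apply seq_NoDup.
    { intros k _ Hk. destruct (kth_point_of_line n l0 k a b) eqn:E; auto.
      apply U in E. tauto. }
    apply Nat.b2n_le_1.
  - rewrite lsum_zero; [lia|]. intros l _. apply lsum_zero. intros k _.
    destruct (kth_point_of_line n l k a b) eqn:E; auto. exfalso; eauto.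
Qed.

Lemma RRcount_le n ell' : RRcount n ell' <= n * n - n.
Proof. rewrite RRcount_dsum, <- dsum_offdiag. apply dsum_le, covering_le. Qed.

Variable ell : nat.

Definition Lcount (n : nat) : nat := lsum (seq ell (S n - ell)) (Nlines z n eps).

Definition Ccount (n : nat) : nat :=
  dsum n (fun a b => Nat.b2n (forallb (fun k => entry z eps (a + k) (b + k)) (seq 0 ell))).

Lemma RRcount_le_Lcount n : RRcount n ell <= n * Lcount n.
Proof.
  unfold RRcount, Lcount. rewrite <- lsum_scale. apply lsum_le.
  intros l Hl. apply in_seq in Hl. apply Nat.mul_le_mono_r. lia.
Qed.

Lemma Ccount_le n : Ccount n <= n * n.
Proof.
  eapply Nat.le_trans. apply (dsum_le n _ (fun _ _ => 1)).
  { intros; apply Nat.b2n_le_1. }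
  rewrite dsum_col, lsum_const, length_seq. lia.
Qed.

Definition line_start (i j : nat) : bool :=
  (0 =? i) || (0 =? j) || negb (entry z eps (i - 1) (j - 1)).

Variable good : nat -> bool.

Definition usable (n a : nat) : bool := good a && (a + ell <=? n).

Definition unusable (n : nat) : nat := lsum (seq 0 n) (fun a => Nat.b2n (negb (usable n a))).

Lemma unusable_le n : unusable n <= lsum (seq 0 n) (fun a => Nat.b2n (negb (good a))) + ell.
Proof.
  assert (Htail : forall m, lsum (seq 0 m) (fun a => Nat.b2n (n <? a + ell)) <= m + ell - n).
  { induction m; [simpl; lia|].
    rewrite lsum_seqS. destruct (Nat.ltb_spec n (m + ell)); cbn [Nat.b2n]; lia. }
  specialize (Htail n).
  assert (unusable n <=
          lsum (seq 0 n) (fun a => Nat.b2n (negb (good a)) + Nat.b2n (n <? a + ell))).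
  { apply lsum_le. intros a _. unfold usable.
    destruct (good a), (Nat.leb_spec (a + ell) n), (Nat.ltb_spec n (a + ell)); simpl; lia. }
  rewrite lsum_add in H. lia.
Qed.

Hypothesis ell_pos : 1 <= ell.
Hypothesis good_recurrent : forall i j t, good i = true -> good j = true -> t < ell ->
  entry z eps (i + t) (j + t) = true.

Lemma covering_ge n ell' a b : 1 <= ell' <= ell ->
  Nat.b2n (usable n a && usable n b && negb (a =? b)) <= covering n ell' a b.
Proof.
  intros Hell'. unfold usable.
  destruct (good a) eqn:Ga, (good b) eqn:Gb, (Nat.leb_spec (a + ell) n),
    (Nat.leb_spec (b + ell) n), (Nat.eqb_spec a b); simpl; try lia.
  destruct (line_through z n eps a b ell') as (l & k & Hkl & Hka & Hkb & Hl & Hline);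
    try lia.
  { intros t Ht. apply good_recurrent; auto; lia. }
  eapply Nat.le_trans. 2: { apply (le_lsum _ _ l). apply in_seq. lia. }
  eapply Nat.le_trans. 2: { apply (le_lsum _ _ k). apply in_seq. lia. }
  unfold kth_point_of_line. rewrite Hline.
  destruct (Nat.ltb_spec k l), (Nat.leb_spec k a), (Nat.leb_spec k b); simpl; lia.
Qed.

Lemma RRcount_ge n ell' : 1 <= ell' <= ell ->
  n * n - n <= RRcount n ell' + 2 * n * unusable n.
Proof.
  intros Hell'. eapply Nat.le_trans. apply (dsum_offdiag_pairs_ge n (usable n)).
  rewrite RRcount_dsum. unfold unusable.
  pose proof (dsum_le n _ _ (fun a b => covering_ge n ell' a b Hell')). lia.
Qed.

Lemma lines_from_le n i j :
  lsum (seq ell (S n - ell)) (fun l => Nat.b2n (is_line z n eps l i j))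
  <= Nat.b2n (line_start i j).
Proof.
  destruct (classic (exists l0, In l0 (seq ell (S n - ell)) /\ is_line z n eps l0 i j = true))
    as [(l0 & Hl0 & H0)|HN].
  - assert (line_start i j = true) as ->.
    { unfold line_start. apply is_line_iff in H0 as (_ & _ & _ & _ & Hs & _).
      destruct (Nat.eqb_spec 0 i), (Nat.eqb_spec 0 j); simpl; auto. rewrite Hs; auto; lia. }
    eapply Nat.le_trans. apply (lsum_le_single _ _ l0). apply seq_NoDup.
    + intros l Hl Hne. destruct (is_line z n eps l i j) eqn:E; auto. exfalso. apply Hne.
      apply in_seq in Hl, Hl0.
      apply (line_unique z n eps l i j l0 i j 0 0); auto; lia.
    + apply Nat.b2n_le_1.
  - rewrite lsum_zero; [lia|]. intros l Hl.
    destruct (is_line z n eps l i j) eqn:E; auto. exfalso; eauto.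
Qed.

Lemma line_start_le n i j : Nat.b2n (line_start i j) <=
  Nat.b2n (0 =? i) + Nat.b2n (0 =? j)
  + (if 1 <=? i then Nat.b2n (negb (usable n (i - 1))) else 0)
  + (if 1 <=? j then Nat.b2n (negb (usable n (j - 1))) else 0).
Proof.
  unfold line_start.
  destruct i as [|i]; [simpl; lia|]. destruct j as [|j]; [simpl; lia|].
  replace (S i - 1) with i by lia. replace (S j - 1) with j by lia. simpl.
  destruct (usable n i) eqn:Ui, (usable n j) eqn:Uj; simpl;
    try (pose proof (Nat.b2n_le_1 (negb (entry z eps i j))); lia).
  apply andb_true_iff in Ui as [Gi _], Uj as [Gj _].
  pose proof (good_recurrent i j 0 Gi Gj ell_pos) as E.
  rewrite !Nat.add_0_r in E. rewrite E. simpl. lia.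
Qed.

Lemma Lcount_le n : Lcount n <= 2 * n + 2 * n * unusable n.
Proof.
  unfold Lcount. rewrite (lsum_ext _ _ _ (fun l _ => Nlines_dsum n l)), lsum_dsum_swap.
  eapply Nat.le_trans.
  { apply dsum_le. intros i j.
    eapply Nat.le_trans; [apply lines_from_le | apply (line_start_le n)]. }
  rewrite !dsum_add.
  rewrite (dsum_row n (fun i => Nat.b2n (0 =? i))), (dsum_col n (fun j => Nat.b2n (0 =? j))).
  rewrite (dsum_row n (fun i => if 1 <=? i then Nat.b2n (negb (usable n (i - 1))) else 0)).
  rewrite (dsum_col n (fun j => if 1 <=? j then Nat.b2n (negb (usable n (j - 1))) else 0)).
  assert (lsum (seq 0 n) (fun i => Nat.b2n (0 =? i)) <= 1).
  { destruct n; [simpl; lia|]. rewrite lsum_b2n_eqb; lia. }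
  assert (lsum (seq 0 n) (fun i => if 1 <=? i then Nat.b2n (negb (usable n (i - 1))) else 0)
          <= unusable n).
  { rewrite (lsum_seq_shift (fun a => Nat.b2n (negb (usable n a))) 1 n). apply lsum_seq_le. lia. }
  nia.
Qed.

Lemma Ccount_ge n : n * n <= Ccount n + 2 * n * unusable n.
Proof.
  eapply Nat.le_trans. apply (dsum_pairs_ge n (usable n)).
  unfold Ccount, unusable.
  enough (dsum n (fun a b => Nat.b2n (usable n a && usable n b)) <=
          dsum n (fun a b =>
            Nat.b2n (forallb (fun k => entry z eps (a + k) (b + k)) (seq 0 ell)))) by lia.
  apply dsum_le. intros a b. unfold usable.
  destruct (good a) eqn:Ga, (good b) eqn:Gb; rewrite ?andb_false_r; simpl; try lia.
  replace (forallb _ _) with true; [destruct (_ <=? n), (_ <=? n); simpl; lia|].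
  symmetry. apply forallb_forall. intros t Ht. apply in_seq in Ht.
  apply good_recurrent; auto; lia.
Qed.

End PlotCounts.

(** * Asymptotics of the recurrence quantifiers *)

Definition sublinear (f : nat -> nat) : Prop :=
  forall d, 0 < d -> eventually (fun n => INR (f n) <= d * INR n).

Lemma eventually_INR_ge (x : R) : eventually (fun n => x <= INR n).
Proof.
  destruct (INR_archimed 1 x ltac:(lra)) as [N HN]. exists N. intros n Hn.
  apply le_INR in Hn. lra.
Qed.

Lemma eventually_nat_ge (N : nat) : eventually (fun n => (N <= n)%nat).
Proof. exists N. auto. Qed.

Lemma is_lim_seq_1_squeeze (u : nat -> R) :
  (forall d, 0 < d -> eventually (fun n => 1 - d <= u n <= 1)) -> is_lim_seq u 1.
Proof.
  intros H. apply is_lim_seq_spec. intros [e He].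
  apply (filter_imp (fun n => 1 - e / 2 <= u n <= 1)); [|apply H; lra].
  simpl. intros n Hn. apply Rabs_def1; lra.
Qed.

Lemma sublinear_add_const f c : sublinear f -> sublinear (fun n => f n + c)%nat.
Proof.
  intros Hf d Hd.
  apply (filter_imp (fun n => INR (f n) <= d / 2 * INR n /\ 2 * INR c / d <= INR n)).
  - intros n [H1 H2]. rewrite plus_INR.
    assert (INR c <= d / 2 * INR n).
    { apply (Rmult_le_compat_l (d / 2)) in H2; [|lra].
      replace (d / 2 * (2 * INR c / d)) with (INR c) in H2 by (field; lra). lra. }
    lra.
  - apply filter_and; [apply Hf; lra | apply eventually_INR_ge].
Qed.

Lemma sublinear_le f g : (forall n, (f n <= g n)%nat) -> sublinear g -> sublinear f.
Proof.
  intros Hfg Hg d Hd.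
  apply (filter_imp _ _ (fun n Hn => Rle_trans _ _ _ (le_INR _ _ (Hfg n)) Hn)), Hg, Hd.
Qed.

Lemma INR_offdiag n : INR (n * n - n) = INR n * INR n - INR n.
Proof. rewrite minus_INR, mult_INR by nia. reflexivity. Qed.

Lemma sum_map_INR_div (s : list nat) f D :
  fold_right Rplus 0 (map (fun l => INR (f l) / D) s) = INR (lsum s f) / D.
Proof. induction s; simpl; [unfold Rdiv; ring|]. rewrite IHs, plus_INR. unfold Rdiv; ring. Qed.

Lemma RR_INR {T} (z : nat -> T) n eps ell' :
  RR z n eps ell' = INR (RRcount z eps n ell') / (INR n * INR n - INR n).
Proof.
  unfold RR, sum_from, lambda, RRcount. rewrite <- sum_map_INR_div. f_equal.
  apply map_ext. intros l. rewrite mult_INR. unfold Rdiv. ring.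
Qed.

Lemma Lambda_INR {T} (z : nat -> T) n eps ell :
  Lambda z n eps ell = INR (Lcount z eps ell n) / (INR n * INR n - INR n).
Proof. apply sum_map_INR_div. Qed.

Lemma Csum_INR {T} (z : nat -> T) n eps ell :
  Csum z n eps ell = INR (Ccount z eps ell n) / (INR n * INR n).
Proof. unfold Csum, pairs. rewrite length_filter_list_prod. reflexivity. Qed.

Section Limits.
Context {T : Type} (z : nat -> T) (eps : R) (ell : nat) (good : nat -> bool).
Hypothesis ell_pos : (1 <= ell)%nat.
Hypothesis good_recurrent : forall i j t, good i = true -> good j = true -> (t < ell)%nat ->
  entry z eps (i + t) (j + t) = true.
Hypothesis good_dense : sublinear (fun n => lsum (seq 0 n) (fun a => Nat.b2n (negb (good a)))).

Let U n := INR (unusable ell good n).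

Lemma unusable_sublinear : sublinear (unusable ell good).
Proof.
  apply (sublinear_le _ (fun n => lsum (seq 0 n) (fun a => Nat.b2n (negb (good a))) + ell)%nat).
  - apply unusable_le.
  - now apply sublinear_add_const.
Qed.

Lemma RR_bounds n ell' : (2 <= n)%nat -> (1 <= ell' <= ell)%nat ->
  1 - 4 * (U n / INR n) <= RR z n eps ell' <= 1.
Proof.
  intros Hn Hell'. rewrite RR_INR.
  pose proof (RRcount_le z eps n ell') as Hup.
  pose proof (RRcount_ge z eps ell good ell_pos good_recurrent n ell' Hell') as Hlow.
  apply le_INR in Hup, Hlow. rewrite plus_INR, !mult_INR, INR_offdiag in * by lia.
  fold (U n) in Hlow. simpl in Hlow.
  assert (HN : 2 <= INR n) by (apply (le_INR 2) in Hn; simpl in Hn; lra).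
  assert (HU : 0 <= U n) by apply pos_INR.
  set (N := INR n) in *. set (r := INR (RRcount z eps n ell')) in *.
  assert (HD : 0 < N * N - N) by nra.
  split; [apply Rle_div_r | apply (Rdiv_le_1 r)]; try lra.
  replace ((1 - 4 * (U n / N)) * (N * N - N)) with (N * N - N - 4 * U n * (N - 1))
    by (field; lra).
  nra.
Qed.

Lemma Csum_bounds n : (1 <= n)%nat -> 1 - 2 * (U n / INR n) <= Csum z n eps ell <= 1.
Proof.
  intros Hn. rewrite Csum_INR.
  pose proof (Ccount_le z eps ell n) as Hup.
  pose proof (Ccount_ge z eps ell good ell_pos good_recurrent n) as Hlow.
  apply le_INR in Hup, Hlow. rewrite plus_INR, !mult_INR in *.
  fold (U n) in Hlow. simpl in Hlow.
  assert (HN : 1 <= INR n) by (apply (le_INR 1) in Hn; simpl in Hn; lra).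
  set (N := INR n) in *. set (c := INR (Ccount z eps ell n)) in *.
  split; [apply Rle_div_r | apply (Rdiv_le_1 c)]; try nra.
  replace ((1 - 2 * (U n / N)) * (N * N)) with (N * N - 2 * N * U n) by (field; lra). lra.
Qed.

Lemma RR_le_mul_Lambda n : (2 <= n)%nat -> RR z n eps ell <= INR n * Lambda z n eps ell.
Proof.
  intros Hn. rewrite RR_INR, Lambda_INR.
  pose proof (RRcount_le_Lcount z eps ell n) as H. apply le_INR in H. rewrite mult_INR in H.
  assert (HN : 2 <= INR n) by (apply (le_INR 2) in Hn; simpl in Hn; lra).
  unfold Rdiv. rewrite <- Rmult_assoc. apply Rmult_le_compat_r; [|exact H].
  left. apply Rinv_0_lt_compat. nra.
Qed.

Lemma Lambda_le n : (2 <= n)%nat -> Lambda z n eps ell <= 4 * (1 + U n) / INR n.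
Proof.
  intros Hn. rewrite Lambda_INR.
  pose proof (Lcount_le z eps ell good ell_pos good_recurrent n) as H.
  apply le_INR in H. rewrite plus_INR, !mult_INR in H. fold (U n) in H. simpl in H.
  assert (HN : 2 <= INR n) by (apply (le_INR 2) in Hn; simpl in Hn; lra).
  assert (HU : 0 <= U n) by apply pos_INR.
  set (N := INR n) in *. apply Rle_div_l; [nra|].
  replace (4 * (1 + U n) / N * (N * N - N)) with (4 * (1 + U n) * (N - 1)) by (field; lra).
  nra.
Qed.

Lemma Csum_lim : is_lim_seq (fun n => Csum z n eps ell) 1.
Proof.
  apply is_lim_seq_1_squeeze. intros d Hd.
  apply (filter_imp (fun n => U n <= d / 2 * INR n /\ (1 <= n)%nat)).
  - intros n [HU Hn]. pose proof (Csum_bounds n Hn).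
    assert (HN : 1 <= INR n) by (apply (le_INR 1) in Hn; simpl in Hn; lra).
    assert (U n / INR n <= d / 2) by (apply Rle_div_l; lra). lra.
  - apply filter_and; [apply unusable_sublinear; lra | apply eventually_nat_ge].
Qed.

Lemma RR_lim ell' : (1 <= ell' <= ell)%nat -> is_lim_seq (fun n => RR z n eps ell') 1.
Proof.
  intros Hell'. apply is_lim_seq_1_squeeze. intros d Hd.
  apply (filter_imp (fun n => U n <= d / 4 * INR n /\ (2 <= n)%nat)).
  - intros n [HU Hn]. pose proof (RR_bounds n ell' Hn Hell').
    assert (HN : 2 <= INR n) by (apply (le_INR 2) in Hn; simpl in Hn; lra).
    assert (U n / INR n <= d / 4) by (apply Rle_div_l; lra). lra.
  - apply filter_and; [apply unusable_sublinear; lra | apply eventually_nat_ge].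
Qed.

Lemma DET_lim : is_lim_seq (fun n => DET z n eps ell) 1.
Proof.
  apply (is_lim_seq_div _ _ 1 1 1).
  - apply RR_lim; lia.
  - apply RR_lim; lia.
  - intros H. injection H. lra.
  - unfold is_Rbar_div, is_Rbar_mult. simpl. do 2 f_equal. field.
Qed.

(* [RR] stays near 1 while [Lambda] = O((1 + unusable n) / n) tends to 0. *)
Lemma Lavg_lim : is_lim_seq (fun n => Lavg z n eps ell) p_infty.
Proof.
  apply is_lim_seq_spec. intros M. set (K := Rabs M + 1).
  assert (HK : 1 <= K) by (unfold K; pose proof (Rabs_pos M); lra).
  assert (HMK : M < K) by (unfold K; pose proof (Rle_abs M); lra).
  assert (HRR : eventually (fun n => 1 / 2 <= RR z n eps ell)).
  { apply (filter_imp (fun n => Rabs (RR z n eps ell - 1) < 1 / 2)).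
    - intros n Hn. apply Rabs_def2 in Hn. lra.
    - exact (proj2 (is_lim_seq_spec _ _) (RR_lim ell ltac:(lia))
               (mkposreal (1 / 2) ltac:(lra))). }
  apply (filter_imp (fun n => 1 / 2 <= RR z n eps ell /\ (2 <= n)%nat /\
                              U n <= 1 / (16 * K) * INR n /\ 16 * K <= INR n)).
  - intros n (Hr & Hn & HU & HNK).
    pose proof (RR_le_mul_Lambda n Hn) as HRL. pose proof (Lambda_le n Hn) as HL.
    assert (HU0 : 0 <= U n) by apply pos_INR.
    set (N := INR n) in *. set (Lam := Lambda z n eps ell) in *.
    assert (HN : 0 < N) by lra.
    apply (Rmult_le_compat_r N) in HL; [|lra].
    replace (4 * (1 + U n) / N * N) with (4 * (1 + U n)) in HL by (field; lra).
    apply (Rmult_le_compat_l (16 * K)) in HU; [|lra].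
    replace (16 * K * (1 / (16 * K) * N)) with N in HU by (field; lra).
    assert (HKL : 2 * K * Lam * N <= N) by nra.
    assert (HLam0 : 0 < Lam) by nra.
    unfold Lavg. fold Lam. apply Rlt_div_r; [lra|]. nra.
  - repeat apply filter_and.
    + exact HRR.
    + apply eventually_nat_ge.
    + apply unusable_sublinear. apply Rdiv_lt_0_compat; lra.
    + apply eventually_INR_ge.
Qed.

End Limits.

(** * Sequences with a letter of full density *)

Lemma rho_le_of_agree {T} (a b : nat -> T) K eps :
  (forall t, (t < K)%nat -> a t = b t) -> / 2 ^ K <= eps -> rho a b <= eps.
Proof.
  intros Hab HK. unfold rho. destruct (excluded_middle_informative _) as [H|H].
  - destruct (constructive_indefinite_description _ H) as [d [Hd1 Hd2]]. simpl.
    assert (K <= d)%nat by (destruct (Nat.lt_ge_cases d K); auto; exfalso; auto).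
    eapply Rle_trans; [|exact HK]. apply Rinv_le_contravar; [apply pow_lt; lra|].
    apply Rle_pow; auto; lra.
  - eapply Rle_trans; [|exact HK]. left. apply Rinv_0_lt_compat, pow_lt; lra.
Qed.

Lemma inv_pow2_le eps : 0 < eps -> exists K, / 2 ^ K <= eps.
Proof.
  intros He. destruct (pow_lt_1_zero (/ 2) ltac:(rewrite Rabs_right; lra) eps He) as [K HK].
  exists K. specialize (HK K (le_n _)).
  rewrite Rabs_right, pow_inv in HK by (apply Rle_ge, pow_le; lra). lra.
Qed.

Definition count_other (c : bool) (w : list bool) : nat :=
  lsum w (fun x => Nat.b2n (negb (Bool.eqb x c))).

Lemma count_other_nil c : count_other c [] = 0%nat.
Proof. reflexivity. Qed.

Lemma count_other_cons c x w :
  count_other c (x :: w) = (Nat.b2n (negb (Bool.eqb x c)) + count_other c w)%nat.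
Proof. reflexivity. Qed.

Lemma count_other_app c u v : count_other c (u ++ v) = (count_other c u + count_other c v)%nat.
Proof. apply lsum_app. Qed.

Lemma count_other_le_length c w : (count_other c w <= length w)%nat.
Proof.
  induction w as [|x w IH]; [reflexivity|].
  rewrite count_other_cons. pose proof (Nat.b2n_le_1 (negb (Bool.eqb x c))). simpl; lia.
Qed.

Lemma count_other_lt_length c w : In c w -> (count_other c w < length w)%nat.
Proof.
  induction w as [|x w IH]; [intros []|]. rewrite count_other_cons. intros [->|H].
  - rewrite eqb_reflx. pose proof (count_other_le_length c w). simpl; lia.
  - specialize (IH H). pose proof (Nat.b2n_le_1 (negb (Bool.eqb x c))). simpl; lia.
Qed.

Lemma count_other_const c w : (forall x, In x w -> x = c) -> count_other c w = 0%nat.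
Proof.
  intros H. apply lsum_zero. intros x Hx. rewrite (H x Hx), eqb_reflx. reflexivity.
Qed.

Definition run_at (y : nat -> bool) (c : bool) (W i : nat) : bool :=
  forallb (fun s => Bool.eqb (y (i + s)%nat) c) (seq 0 W).

Lemma run_atP y c W i : run_at y c W i = true <-> forall s, (s < W)%nat -> y (i + s)%nat = c.
Proof.
  unfold run_at. rewrite forallb_forall. split; intros H s Hs.
  - apply Bool.eqb_prop, H, in_seq. lia.
  - apply in_seq in Hs. rewrite H by lia. apply eqb_reflx.
Qed.

(* The entry at [(i + t, j + t)] compares the first [K] letters of [y^(m)] after [i + t] and
   [j + t], that is, [y] at [i + t + u + v] and [j + t + u + v] with [u < K], [v < m]. *)
Lemma run_at_recurrent y c m ell K eps i j t : / 2 ^ K <= eps ->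
  run_at y c (K + m + ell) i = true -> run_at y c (K + m + ell) j = true -> (t < ell)%nat ->
  entry (embed m y) eps (i + t) (j + t) = true.
Proof.
  intros HK Hi Hj Ht. rewrite run_atP in Hi, Hj.
  unfold entry, Rleb. destruct (Rle_dec _ _) as [|Hne]; [reflexivity|]. exfalso. apply Hne.
  apply (rho_le_of_agree _ _ K); auto.
  intros u Hu. unfold shift, embed. apply map_ext_in. intros v Hv. apply in_seq in Hv.
  replace (i + t + u + v)%nat with (i + (t + u + v))%nat by lia.
  replace (j + t + u + v)%nat with (j + (t + u + v))%nat by lia.
  rewrite Hi, Hj by lia. reflexivity.
Qed.

Lemma sublinear_shift_scale f W :
  sublinear f -> sublinear (fun n => W * f (n + W))%nat.
Proof.
  intros Hf d Hd. assert (HW : 0 <= INR W) by apply pos_INR.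
  apply (filter_imp (fun n => INR (f (n + W)%nat) <= d / (2 * (INR W + 1)) * INR (n + W) /\
                              (W <= n)%nat)).
  - intros n [H Hn]. apply le_INR in Hn. rewrite mult_INR. rewrite plus_INR in H.
    assert (INR W * INR (f (n + W)%nat) <= INR W * (d / (2 * (INR W + 1)) * (INR n + INR W)))
      by (apply Rmult_le_compat_l; lra).
    assert (INR W * (d / (2 * (INR W + 1)) * (INR n + INR W)) <= d * INR n); [|lra].
    replace (INR W * (d / (2 * (INR W + 1)) * (INR n + INR W)))
      with (d * ((INR n + INR W) / 2) * (INR W / (INR W + 1))) by (field; lra).
    assert (INR W / (INR W + 1) <= 1) by (apply (Rdiv_le_1 (INR W)); lra).
    assert (0 <= d * ((INR n + INR W) / 2)) by (apply Rmult_le_pos; lra).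
    nra.
  - apply filter_and; [|apply eventually_nat_ge].
    destruct (Hf (d / (2 * (INR W + 1))) ltac:(apply Rdiv_lt_0_compat; lra)) as [N HN].
    exists N. intros n Hn. apply HN. lia.
Qed.

Lemma run_at_dense y c W :
  sublinear (fun n => count_other c (map y (seq 0 n))) ->
  sublinear (fun n => lsum (seq 0 n) (fun a => Nat.b2n (negb (run_at y c W a)))).
Proof.
  intros Hd. set (g a := Nat.b2n (negb (Bool.eqb (y a) c))).
  apply (sublinear_le _ (fun n => W * count_other c (map y (seq 0 (n + W))))%nat).
  2: now apply (sublinear_shift_scale (fun n => count_other c (map y (seq 0 n)))).
  intros n. unfold count_other. rewrite lsum_map. fold g.
  eapply Nat.le_trans.
  - apply (lsum_le _ _ (fun a => lsum (seq 0 W) (fun s => g (a + s)%nat))).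
    intros a _. apply b2n_negb_forallb.
  - rewrite lsum_swap.
    replace (W * lsum (seq 0 (n + W)) g)%nat with (lsum (seq 0 W) (fun _ => lsum (seq 0 (n + W)) g))
      by (rewrite lsum_const, length_seq; lia).
    apply lsum_le. intros s Hs. apply in_seq in Hs.
    eapply Nat.le_trans; [apply lsum_seq_shift_le | apply lsum_seq_le]. lia.
Qed.

Theorem recurrence_limits_of_full_density y c m ell eps : (1 <= ell)%nat -> 0 < eps ->
  sublinear (fun n => count_other c (map y (seq 0 n))) ->
    is_lim_seq (fun n => Csum (embed m y) n eps ell) 1 /\
    is_lim_seq (fun n => RR (embed m y) n eps ell) 1 /\
    is_lim_seq (fun n => DET (embed m y) n eps ell) 1 /\
    is_lim_seq (fun n => Lavg (embed m y) n eps ell) p_infty.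
Proof.
  intros Hell He Hd. destruct (inv_pow2_le eps He) as [K HK].
  set (good := run_at y c (K + m + ell)).
  assert (Hrec := fun i j t => run_at_recurrent y c m ell K eps i j t HK).
  assert (Hdense := run_at_dense y c (K + m + ell) Hd).
  repeat split.
  - exact (Csum_lim _ _ _ good Hell Hrec Hdense).
  - exact (RR_lim _ _ _ good Hell Hrec Hdense ell ltac:(lia)).
  - exact (DET_lim _ _ _ good Hell Hrec Hdense).
  - exact (Lavg_lim _ _ _ good Hell Hrec Hdense).
Qed.

(** * Non-primitive substitutions *)

Lemma subst_iter_add zeta j i a :
  subst_iter zeta (j + i) a = flat_map (subst_iter zeta j) (subst_iter zeta i a).
Proof.
  unfold subst_iter at 1. rewrite Nat.iter_add. fold (subst_iter zeta i a).
  generalize (subst_iter zeta i a) as w.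
  induction j as [|j IH]; intros w; simpl.
  - induction w as [|x w IHw]; simpl; [reflexivity|]. now rewrite <- IHw.
  - rewrite IH. unfold subst_word. induction w as [|x w IHw]; simpl; [reflexivity|].
    now rewrite flat_map_app, IHw.
Qed.

Lemma length_subst_iter zeta q k a :
  uniform_subst zeta q -> length (subst_iter zeta k a) = (q ^ k)%nat.
Proof.
  intros (_ & H0 & H1). induction k as [|k IH]; [reflexivity|].
  change (subst_iter zeta (S k) a) with (subst_word zeta (subst_iter zeta k a)).
  unfold subst_word. rewrite length_flat_map, (map_ext _ (fun _ => q)) by (intros []; auto).
  rewrite map_const, IH. simpl. clear. induction (q ^ k)%nat; simpl; lia.
Qed.

(* If [zeta c] consists of [c]'s only, the letters other than [c] in [zeta^j b] all descend
   from the letters other than [c] in [zeta (negb c)]. *)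
Lemma count_other_subst_iter zeta c j b : count_other c (zeta c) = 0%nat ->
  (count_other c (subst_iter zeta j b) <= count_other c (zeta (negb c)) ^ j)%nat.
Proof.
  intros Hc. set (r := count_other c (zeta (negb c))).
  enough (E : count_other c (subst_iter zeta j b) = (r ^ j * count_other c [b])%nat).
  { rewrite E, count_other_cons, count_other_nil.
    pose proof (Nat.b2n_le_1 (negb (Bool.eqb b c))). nia. }
  induction j as [|j IH]; [simpl; lia|].
  change (subst_iter zeta (S j) b) with (subst_word zeta (subst_iter zeta j b)).
  rewrite Nat.pow_succ_r', <- Nat.mul_assoc, <- IH. unfold subst_word. clear IH.
  induction (subst_iter zeta j b) as [|x w IHw]; [simpl; rewrite count_other_nil; lia|].
  simpl. rewrite count_other_app, IHw, count_other_cons.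
  destruct (Bool.eqb x c) eqn:E; simpl.
  - apply Bool.eqb_prop in E as ->. rewrite Hc. lia.
  - destruct x, c; try discriminate E; unfold r; simpl; lia.
Qed.

Section Blocks.
Variables (c : bool) (g : bool -> list bool) (M R : nat).
Hypothesis length_g : forall b, length (g b) = M.
Hypothesis count_g : forall b, (count_other c (g b) <= R)%nat.

Lemma count_other_prefix_blocks w : forall u s, u ++ s = flat_map g w ->
  (M * count_other c u <= (length u + M) * R)%nat.
Proof.
  induction w as [|a w IH]; intros u s H; simpl in H.
  - apply app_eq_nil in H as [-> _]. rewrite count_other_nil. lia.
  - destruct (app_eq_app _ _ _ _ H) as [l [[E1 E2]|[E1 E2]]].
    + subst u. specialize (IH l s (eq_sym E2)). rewrite count_other_app, length_app, length_g.
      specialize (count_g a). nia.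
    + assert (count_other c u <= R)%nat.
      { specialize (count_g a). rewrite E1, count_other_app in count_g. lia. }
      nia.
Qed.

Lemma count_other_infix_blocks w : forall p u s, p ++ u ++ s = flat_map g w ->
  (M * count_other c u <= (length u + 2 * M) * R)%nat.
Proof.
  induction w as [|a w IH]; intros p u s H; simpl in H.
  - apply app_eq_nil in H as [_ H]. apply app_eq_nil in H as [-> _]. rewrite count_other_nil. lia.
  - destruct (app_eq_app _ _ _ _ H) as [l [[E1 E2]|[E1 E2]]].
    + eapply IH. symmetry. exact E2.
    + destruct (app_eq_app _ _ _ _ E2) as [l' [[F1 F2]|[F1 F2]]].
      * subst u. pose proof (count_other_prefix_blocks w l' s (eq_sym F2)).
        assert (count_other c l <= R)%nat.
        { specialize (count_g a). rewrite E1, count_other_app in count_g. lia. }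
        rewrite count_other_app, length_app. nia.
      * assert (count_other c u <= R)%nat.
        { specialize (count_g a). rewrite E1, F1, !count_other_app in count_g. lia. }
        nia.
Qed.

End Blocks.

Lemma pow_ratio_small q d : (2 <= q)%nat -> 0 < d ->
  exists j, INR ((q - 1) ^ j) <= d * INR (q ^ j).
Proof.
  intros Hq Hd.
  assert (Hq0 : 2 <= INR q) by (apply (le_INR 2) in Hq; simpl in Hq; lra).
  assert (HQ1 : INR (q - 1) = INR q - 1) by (rewrite minus_INR by lia; simpl; lra).
  set (x := INR (q - 1) / INR q).
  assert (Hx : 0 <= x < 1).
  { unfold x. rewrite HQ1. split.
    - apply Rdiv_le_0_compat; lra.
    - apply Rlt_div_l; lra. }
  destruct (pow_lt_1_zero x ltac:(rewrite Rabs_right; lra) d Hd) as [j Hj].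
  exists j. specialize (Hj j (le_n _)).
  rewrite Rabs_right in Hj by (apply Rle_ge, pow_le; lra).
  unfold x, Rdiv in Hj. rewrite Rpow_mult_distr, pow_inv in Hj. rewrite !pow_INR.
  assert (0 < INR q ^ j) by (apply pow_lt; lra).
  apply (Rmult_lt_compat_r (INR q ^ j)) in Hj; auto.
  rewrite Rmult_assoc, Rinv_l, Rmult_1_r in Hj by lra. lra.
Qed.

(* Choosing [j] with [(q-1)^j <= d q^j / 3], a prefix of [y] of length [N >= q^j] is a
   subword of a concatenation of blocks [zeta^j b] of length [q^j], each with at most
   [(q-1)^j] letters other than [c]. *)
Lemma count_other_sublinear_fixed_letter zeta q c y : uniform_subst zeta q ->
  (forall x, In x (zeta c) -> x = c) -> In c (zeta (negb c)) -> in_X zeta y ->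
  sublinear (fun n => count_other c (map y (seq 0 n))).
Proof.
  intros HU Hc Hnc HX d Hd. pose proof HU as (Hq & L0 & L1).
  apply count_other_const in Hc.
  set (r := count_other c (zeta (negb c))).
  assert (Hr : (r <= q - 1)%nat).
  { pose proof (count_other_lt_length c _ Hnc). destruct c; simpl in *; lia. }
  destruct (pow_ratio_small q (d / 3) Hq ltac:(lra)) as [j Hj].
  exists (q ^ j)%nat. intros n Hn.
  destruct (HX n) as (a & k & _ & p & s & Hps).
  assert (Hjk : (j <= k)%nat).
  { assert (Hlen : (n <= q ^ k)%nat).
    { rewrite <- (length_subst_iter zeta q k a HU), Hps, !length_app, length_map, length_seq.
      lia. }
    destruct (Nat.le_gt_cases j k); auto.
    assert (q ^ k < q ^ j)%nat by (apply Nat.pow_lt_mono_r; lia). lia. }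
  replace k with (j + (k - j))%nat in Hps by lia. rewrite subst_iter_add in Hps.
  pose proof (count_other_infix_blocks c (subst_iter zeta j) (q ^ j) (r ^ j)
    (fun b => length_subst_iter zeta q j b HU) (fun b => count_other_subst_iter zeta c j b Hc)
    _ _ _ _ (eq_sym Hps)) as HB.
  rewrite length_map, length_seq in HB.
  assert (Hrj : (r ^ j <= (q - 1) ^ j)%nat) by (apply Nat.pow_le_mono_l; lia).
  apply le_INR in HB, Hrj, Hn. rewrite !mult_INR, plus_INR, mult_INR in HB. simpl in HB.
  assert (0 < INR (q ^ j)) by (apply lt_0_INR, Nat.neq_0_lt_0, Nat.pow_nonzero; lia).
  assert (0 <= INR (r ^ j)) by apply pos_INR.
  set (Q := INR (q ^ j)) in *. set (Rj := INR (r ^ j)) in *.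
  set (D := INR (count_other c (map y (seq 0 n)))) in *. set (N := INR n) in *.
  assert (Q * D <= 3 * N * Rj) by nra.
  assert (3 * N * Rj <= 3 * N * (d / 3 * Q)) by (apply Rmult_le_compat_l; nra).
  nra.
Qed.

Definition constant_word (w : list bool) : Prop := exists e, forall x, In x w -> x = e.

Lemma constant_images_subst_iter zeta k a :
  (forall b, constant_word (zeta b)) -> constant_word (subst_iter zeta k a).
Proof.
  intros Hc. induction k as [|k [e0 He0]].
  - exists a. simpl. intros x [->|[]]. reflexivity.
  - destruct (Hc e0) as [e1 He1]. exists e1. intros x Hx.
    change (subst_iter zeta (S k) a) with (subst_word zeta (subst_iter zeta k a)) in Hx.
    apply in_flat_map in Hx as [b [Hb Hx]]. rewrite (He0 b Hb) in Hx. auto.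
Qed.

Lemma count_other_sublinear_constant_images zeta y :
  (forall a, constant_word (zeta a)) -> in_X zeta y ->
  sublinear (fun n => count_other (y 0%nat) (map y (seq 0 n))).
Proof.
  intros Hc HX d Hd. exists 0%nat. intros n _.
  assert (E : forall i, y i = y 0%nat).
  { intros i. destruct (HX (S i)) as (a & k & _ & p & s & Hps).
    destruct (constant_images_subst_iter zeta k a Hc) as [e He].
    assert (Hy : forall t, (t < S i)%nat -> y t = e).
    { intros t Ht. apply He. rewrite Hps. apply in_or_app. right. apply in_or_app. left.
      apply in_map, in_seq. lia. }
    rewrite (Hy i), (Hy 0%nat) by lia. reflexivity. }
  rewrite count_other_const; [simpl; pose proof (pos_INR n); nra|].
  intros x Hx. apply in_map_iff in Hx as (i & <- & _). apply E.
Qed.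

(* If neither image is constant, [zeta] is primitive with [k = 1]; if exactly one image,
   say [zeta a1], is constant, then either [zeta a1] is a power of [a1] or, being a power
   of [negb a1], it makes [zeta] primitive with [k = 2]. *)
Lemma nonprimitive_cases zeta q : uniform_subst zeta q -> ~ subst_primitive zeta ->
  (forall a, constant_word (zeta a)) \/
  exists c, (forall x, In x (zeta c) -> x = c) /\ In c (zeta (negb c)).
Proof.
  intros (Hq & L0 & L1) HNP.
  assert (Hne : forall a, exists x, In x (zeta a)).
  { intros a. destruct (zeta a) as [|x w] eqn:E; [|exists x; simpl; auto].
    destruct a; [rewrite E in L1 | rewrite E in L0]; simpl in *; lia. }
  destruct (classic (forall a, constant_word (zeta a))) as [H|H];
    [left; exact H | right].
  apply not_all_ex_not in H as [a0 Ha0].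
  assert (Hmix : forall b, In b (zeta a0)).
  { intros b. apply NNPP. intros Hb. apply Ha0. exists (negb b). intros x Hx.
    destruct x, b; simpl; congruence. }
  assert (H1 : exists a1 b1, ~ In b1 (zeta a1)).
  { apply NNPP. intros HN. apply HNP. exists 1%nat. split; [lia|]. intros a b.
    unfold subst_iter. simpl. rewrite app_nil_r. apply NNPP. eauto. }
  destruct H1 as (a1 & b1 & Hb1).
  assert (A1 : a1 = negb a0).
  { destruct (bool_dec a1 a0) as [->|]; [exfalso; apply Hb1, Hmix|].
    destruct a0, a1; simpl; congruence. }
  assert (C1 : forall x, In x (zeta a1) -> x = negb b1).
  { intros x Hx. destruct x, b1; simpl; auto; contradiction. }
  destruct (bool_dec (negb b1) a1) as [E|E].
  - exists a1. split; [intros x Hx; rewrite <- E; exact (C1 x Hx)|].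
    rewrite A1, negb_involutive. apply Hmix.
  - exfalso. apply HNP. exists 2%nat. split; [lia|]. intros a b.
    unfold subst_iter. simpl. rewrite app_nil_r. unfold subst_word. apply in_flat_map.
    exists a0. split; [|apply Hmix].
    destruct (bool_dec a a0) as [->|]; [apply Hmix|].
    assert (a = a1) as -> by (subst a1; destruct a, a0; simpl in *; congruence).
    destruct (Hne a1) as [x Hx]. rewrite (C1 x Hx) in Hx.
    replace a0 with (negb b1); auto. subst a1. destruct a0, b1; simpl in *; congruence.
Qed.

Theorem theorem1p2 (zeta : bool -> list bool) (q : nat) :
  uniform_subst zeta q -> ~ subst_primitive zeta ->
  forall (y : nat -> bool), in_X zeta y ->
  forall (m ell : nat) (eps : R), (1 <= m)%nat -> (1 <= ell)%nat -> 0 < eps ->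
    is_lim_seq (fun n => Csum (embed m y) n eps ell) 1 /\
    is_lim_seq (fun n => RR (embed m y) n eps ell) 1 /\
    is_lim_seq (fun n => DET (embed m y) n eps ell) 1 /\
    is_lim_seq (fun n => Lavg (embed m y) n eps ell) p_infty.
Proof.
  intros HU HNP y HX m ell eps _ Hell He.
  destruct (nonprimitive_cases zeta q HU HNP) as [Hconst | (c & Hc & Hnc)].
  - apply (recurrence_limits_of_full_density y (y 0%nat)); auto.
    now apply (count_other_sublinear_constant_images zeta).
  - apply (recurrence_limits_of_full_density y c); auto.
    now apply (count_other_sublinear_fixed_letter zeta q).
Qed.
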